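(* Let $G = (V, E, b, c)$ be a weighted hypergraph whose edges $e_0, e_1, \dots$ are processed by procedure COVER, and let $r$ be any integer. Then for every time $t$, \[ b\left( \{ v \in e_t \mid \mathrm{eff}_{t+1}(v) \leq r \} \right) < 2^{r+1} \cdot c(e_t). \]
   Context: A weighted hypergraph $G = (V, E, b, c)$ has vertex set $V$, a multiset $E$ of non-empty edges $e \subseteq V$, benefits $b : V \to \mathbb{Q}_{>0}$ and costs $c : E \to \mathbb{Q}_{>0}$; $b(U) = \sum_{v \in U} b(v)$. Edges arrive in a stream $e_0, e_1, \dots$, and $\mathrm{id}(e)$ is an identifier of edge $e$. Procedure COVER maintains for each $v \in V$ a variable $\mathrm{eid}(v)$ (initially NULL) and an integer variable $\mathrm{eff}(v)$ (initially $-\infty$); $\mathrm{eff}_t(v)$ denotes the value of $\mathrm{eff}(v)$ just before $e_t$ is processed. For $T \subseteq e_t$ the level is $\mathrm{lev}_t(T) = \lceil \lg (b(T)/c(e_t)) \rceil$ ($\lg$ = base-2 logarithm), and $T$ is effective at time $t$ if $\mathrm{lev}_t(T) > \mathrm{eff}_t(v)$ for every $v \in T$ (the empty set is vacuously effective). When $e_t$ arrives, COVER computes an effective subset $T \subseteq e_t$ of largest benefit $b(T)$ (any such subset) and, for every $v \in T$, sets $\mathrm{eid}(v) \leftarrow \mathrm{id}(e_t)$ and $\mathrm{eff}(v) \leftarrow \mathrm{lev}_t(T)$. *)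

From mathcomp Require Import all_boot all_order all_algebra.
From Stdlib Require Import ClassicalEpsilon.
Set Implicit Arguments. Unset Strict Implicit. Unset Printing Implicit Defensive.
Import Order.TTheory GRing.Theory Num.Theory.
Local Open Scope ring_scope.

Definition is_ceil_lg (x : rat) (k : int) : Prop :=
  (2%:Q ^ (k - 1) < x) /\ (x <= 2%:Q ^ k).

(* ceil(lg x) for x > 0 (unique such k exists); arbitrary otherwise. *)
Definition ceil_lg (x : rat) : int :=
  epsilon (inhabits 0%:Z) (is_ceil_lg x).

Definition bsum (V : finType) (b : V -> rat) (U : {set V}) : rat :=
  \sum_(v in U) b v.

(* eff values: None stands for -oo *)
Definition lt_eff (m : option int) (k : int) : bool :=
  if m is Some m' then m' < k else true.
Definition le_eff (m : option int) (k : int) : bool :=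
  if m is Some m' then m' <= k else true.

Section Cover.
Variables (V : finType) (b : V -> rat) (e : nat -> {set V}) (c : nat -> rat).

Definition lev (t : nat) (T : {set V}) : int := ceil_lg (bsum b T / c t).

Definition effective (effs : V -> option int) (t : nat) (T : {set V}) : Prop :=
  forall v, v \in T -> lt_eff (effs v) (lev t T).

(* A run of COVER: eff t = values of eff just before e_t is processed,
   eid t = values of eid just before e_t is processed (id(e_t) := t),
   T t = the effective subset chosen when e_t arrives. *)
Definition COVER_run (eff : nat -> V -> option int) (eid : nat -> V -> option nat)
    (T : nat -> {set V}) : Prop :=
  (forall v, eff 0%N v = None) /\ (forall v, eid 0%N v = None) /\
  (forall t, [/\ T t \subset e t, effective (eff t) t (T t) &
     forall T' : {set V}, T' \subset e t -> effective (eff t) t T' ->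
       bsum b T' <= bsum b (T t)]) /\
  (forall t v, eff t.+1 v = if v \in T t then Some (lev t (T t)) else eff t v) /\
  (forall t v, eid t.+1 v = if v \in T t then Some t else eid t v).
End Cover.

(** Suppose the vertices [S] of [e_t] left at level at most [r] had benefit at
    least [2^(r+1) c(e_t)]. Then [S ∪ T_t] has level at least [r + 1]; it is
    effective, because [T_t] was and the vertices of [S] outside [T_t] kept
    their level [≤ r]. Maximality of [T_t] gives [b(S ∪ T_t) ≤ b(T_t)], so
    [T_t] itself reaches level [r + 1]. Every vertex of [T_t] is then raised
    above [r], hence [S] and [T_t] are disjoint and [b(S) ≤ 0], which is absurd. *)

From mathcomp Require Import all_boot all_order all_algebra.
From mathcomp Require Import zify.
From Stdlib Require Import ClassicalEpsilon.
Set Implicit Arguments. Unset Strict Implicit. Unset Printing Implicit Defensive.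
Import Order.TTheory GRing.Theory Num.Theory.
Local Open Scope ring_scope.

Lemma ceil_lg_exists (x : rat) : 0 < x -> exists k, is_ceil_lg x k.
Proof.
move=> x_gt0.
set N := Num.Def.archi_bound x^-1.
have ltxVN : x^-1 < 2 ^+ N by apply: upper_nthrootP.
have ltxn : x < 2 ^+ Num.Def.archi_bound x by apply: upper_nthrootP.
(* Look for the least [m] with [x <= 2^(m - N)]; [m = 0] is excluded by [ltxVN]. *)
pose P m := x <= 2%:Q ^ (m%:Z - N%:Z).
have exP : exists m, P m.
  by exists (Num.Def.archi_bound x + N)%N; rewrite /P PoszD addrK; exact: ltW.
have [[|m] Pm min_m] := ex_minnP exP.
  move: Pm; rewrite /P sub0r -invr_expz -(invrK x) lef_pV2 ?posrE ?invr_gt0 //.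
    by rewrite leNgt ltxVN.
  exact: exprz_gt0.
exists (m.+1%:Z - N%:Z); split=> //.
have : ~~ P m by apply/negP => /min_m; rewrite ltnn.
by rewrite /P -ltNge; have -> : m.+1%:Z - N%:Z - 1 = m%:Z - N%:Z by lia.
Qed.

Lemma ceil_lgP (x : rat) : 0 < x -> is_ceil_lg x (ceil_lg x).
Proof. by move=> /ceil_lg_exists ex_k; apply: epsilon_spec. Qed.

Lemma ceil_lg_ge (x : rat) (k : int) : 2%:Q ^ k <= x -> k <= ceil_lg x.
Proof.
move=> le_kx.
have [_ le_x] := ceil_lgP (lt_le_trans (exprz_gt0 k (isT : 0 < 2%:Q)) le_kx).
by rewrite -(ler_eXz2l (isT : 1 < 2%:Q)) (le_trans le_kx).
Qed.

Lemma le_ceil_lg (x y : rat) : 0 < x -> x <= y -> ceil_lg x <= ceil_lg y.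
Proof.
move=> x_gt0 le_xy.
have [lt_x _] := ceil_lgP x_gt0.
have [_ le_y] := ceil_lgP (lt_le_trans x_gt0 le_xy).
have := lt_le_trans (lt_le_trans lt_x le_xy) le_y.
by rewrite (ltr_eXz2l (isT : 1 < 2%:Q)); lia.
Qed.

Lemma bsumU (V : finType) (b : V -> rat) (A B : {set V}) :
  [disjoint A & B] -> bsum b (A :|: B) = bsum b A + bsum b B.
Proof. by move=> dis_AB; rewrite /bsum (eq_bigl [predU A & B]) ?bigU // => v; rewrite !inE. Qed.

Lemma lt_eff_le m k k' : lt_eff m k -> k <= k' -> lt_eff m k'.
Proof. by case: m => //= m; apply: lt_le_trans. Qed.

Lemma le_lt_eff m r k : le_eff m r -> r < k -> lt_eff m k.
Proof. by case: m => //= m; apply: le_lt_trans. Qed.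

Section Benefits.
Variables (V : finType) (b : V -> rat).
Hypothesis b_gt0 : forall v, 0 < b v.

Lemma bsum_gt0 (A : {set V}) v : v \in A -> 0 < bsum b A.
Proof.
move=> vA; rewrite /bsum (bigD1 v) //= ltr_pwDl ?b_gt0 //.
by apply: sumr_ge0 => w _; apply: ltW.
Qed.

Lemma bsum_subset (A B : {set V}) : A \subset B -> bsum b A <= bsum b B.
Proof.
move=> /setIidPr sAB; rewrite /bsum [X in _ <= X](big_setID A) /= sAB lerDl.
by apply: sumr_ge0 => w _; apply: ltW.
Qed.

Variables (e : nat -> {set V}) (c : nat -> rat).
Hypothesis c_gt0 : forall t, 0 < c t.

Lemma lev_ge t k (U : {set V}) : 2%:Q ^ k * c t <= bsum b U -> k <= lev b c t U.
Proof. by move=> le_kU; apply: ceil_lg_ge; rewrite ler_pdivlMr. Qed.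

Lemma lev_subset t (A B : {set V}) v :
  v \in A -> A \subset B -> lev b c t A <= lev b c t B.
Proof.
move=> vA sAB; apply: le_ceil_lg; first by rewrite divr_gt0 ?(bsum_gt0 vA).
by rewrite ler_pM2r ?invr_gt0 ?bsum_subset.
Qed.

Lemma effectiveU effs t (A B : {set V}) :
  effective b c effs t A ->
  (forall v, v \in B -> v \notin A -> lt_eff (effs v) (lev b c t (A :|: B))) ->
  effective b c effs t (A :|: B).
Proof.
move=> effA effB v; rewrite in_setU; have [vA _ | vA /= vB] := boolP (v \in A).
  exact: lt_eff_le (effA v vA) (lev_subset t vA (subsetUl A B)).
exact: effB.
Qed.

End Benefits.

Theorem lemma7 (V : finType) (b : V -> rat) (e : nat -> {set V}) (c : nat -> rat)
    (hb : forall v, 0 < b v) (he : forall t, e t != set0) (hc : forall t, 0 < c t)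
    (eff : nat -> V -> option int) (eid : nat -> V -> option nat) (T : nat -> {set V})
    (hrun : COVER_run b e c eff eid T) (r : int) (t : nat) :
  bsum b [set v in e t | le_eff (eff t.+1 v) r] < 2%:Q ^ (r + 1) * c t.
Proof.
have [_ [_ [opt [step _]]]] := hrun; have [sTe effT maxT] := opt t.
set S := [set v in e t | le_eff (eff t.+1 v) r].
rewrite ltNge; apply/negP => le_S.
have levU : r + 1 <= lev b c t (T t :|: S).
  by apply: lev_ge => //; rewrite (le_trans le_S) ?bsum_subset ?subsetUr.
have effU : effective b c (eff t) t (T t :|: S).
  apply: effectiveU => // v; rewrite inE step => /andP[_] + vT; rewrite (negbTE vT) => le_v.
  by apply: le_lt_eff le_v (lt_le_trans _ levU); rewrite ltrDl.
have le_UT : bsum b (T t :|: S) <= bsum b (T t).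
  by apply: maxT effU; rewrite subUset sTe; apply/subsetP => v; rewrite inE => /andP[].
have levT : r + 1 <= lev b c t (T t).
  by apply: lev_ge => //; rewrite (le_trans le_S) // (le_trans _ le_UT) ?bsum_subset ?subsetUr.
have dis_TS : [disjoint T t & S].
  apply/pred0P => v /=; apply/negP => /andP[vT]; rewrite inE step vT => /andP[_].
  by apply/negP; rewrite -ltNge (lt_le_trans _ levT) // ltrDl.
move: le_UT; rewrite bsumU // gerDl => le_S0.
have pos : 0 < 2%:Q ^ (r + 1) * c t by rewrite mulr_gt0 ?exprz_gt0.
by move: pos; rewrite ltNge (le_trans le_S le_S0).
Qed.
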